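(* Let $X$ be a real Banach space, $x\in X$ and $\delta\in[0,2]$. Then: (1) $P_{B_X}(x,\delta)\subseteq Q_{B_X}(-x,\delta)$ whenever $\|x\|\ge1$; (2) $P_{S_X}(x,\delta)\subseteq Q_{S_X}(-x,\delta)$; (3) $Q_{S_X}(x)=Q_{B_X}(x)$.
   Context: $B_X,S_X$ are the closed unit ball and unit sphere. For non-empty bounded $F$, $r(F,x)=\sup_{y\in F}\|x-y\|$, $Q_F(x,\delta)=\{y\in F:\|x-y\|\ge r(F,x)-\delta\}$, $Q_F(x)=Q_F(x,0)$. For non-empty closed $A$, $P_A(x,\delta)=\{y\in A:\|x-y\|\le\inf_{z\in A}\|x-z\|+\delta\}$. *)

From HB Require Import structures.
From mathcomp Require Import all_boot all_order all_algebra.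
From mathcomp Require Import all_classical all_reals all_analysis.
Set Implicit Arguments. Unset Strict Implicit. Unset Printing Implicit Defensive.
Import Order.TTheory GRing.Theory Num.Theory.
Import numFieldNormedType.Exports.
Local Open Scope classical_set_scope.
Local Open Scope ring_scope.

Section Defs.
Context {R : realType} {X : normedModType R}.

Definition unit_ball : set X := [set y | `|y| <= 1].
Definition unit_sphere : set X := [set y | `|y| = 1].

Definition farrad (F : set X) (x : X) : R := sup [set `|x - y| | y in F].

Definition Qfar (F : set X) (x : X) (d : R) : set X :=
  [set y | F y /\ farrad F x - d <= `|x - y|].

Definition Pnear (A : set X) (x : X) (d : R) : set X :=
  [set y | A y /\ `|x - y| <= inf [set `|x - z| | z in A] + d].

End Defs.

(* Both farthest distances from x to the unit ball and to the unit sphere equal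
   ||x|| + 1, attained at the unit vector pointing away from x, and the nearest
   distance to the sphere is | ||x|| - 1 |.  If y is delta-nearest to x, the
   triangle inequality 2 max(||x||, ||y||) <= ||x + y|| + ||x - y|| makes y
   delta-farthest from -x whenever ||x|| >= 1 or ||y|| = 1.  A point of the
   ball at distance ||x|| + 1 from x must lie on the sphere. *)
From HB Require Import structures.
From mathcomp Require Import all_boot all_order all_algebra.
From mathcomp Require Import all_classical all_reals all_analysis.
From mathcomp Require Import lra.
Import Order.TTheory GRing.Theory Num.Theory.
Import numFieldNormedType.Exports.
Local Open Scope classical_set_scope.
Local Open Scope ring_scope.

Section UnitBallDistances.
Variables (R : realType) (X : normedModType R).
Hypothesis X_nontrivial : exists v : X, v != 0.

Lemma unit_sphere_sub_ball : @unit_sphere R X `<=` unit_ball.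
Proof. by move=> y; rewrite /unit_sphere /unit_ball /= => ->. Qed.

Lemma ler_norm2B_normD (x y : X) : 2 * `|x| - `|x - y| <= `|x + y|.
Proof.
rewrite lerBlDr mulr_natl -normrMn mulr2n.
have -> : x + x = (x + y) + (x - y) by rewrite addrACA subrr addr0.
exact: ler_normD.
Qed.

Lemma exists_unit_dist (x : X) :
  exists2 e : X, `|e| = 1 & forall t : R, `|x - t *: e| = `| `|x| - t |.
Proof.
have [->|x0] := eqVneq x 0.
  have [v v0] := X_nontrivial; exists (`|v|^-1 *: v); first exact: normfZV.
  by move=> t; rewrite sub0r normrN normrZ normfZV // mulr1 normr0 sub0r normrN.
exists (`|x|^-1 *: x); first exact: normfZV.
have nx0 : `|x| != 0 by rewrite normr_eq0.
move=> t; rewrite scalerA -{1}(scale1r x) -scalerBl normrZ.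
by rewrite -[X in _ * X]normr_id -normrM mulrBl mul1r -mulrA mulVf // mulr1.
Qed.

Lemma farradE (F : set X) (x : X) :
  unit_sphere `<=` F -> F `<=` unit_ball -> farrad F x = `|x| + 1.
Proof.
move=> SF FB; have [e e1 xe] := exists_unit_dist x.
have far_e : `|x - - e| = `|x| + 1.
  by rewrite -(scaleN1r e) xe opprK ger0_norm // addr_ge0.
have dist_le z : F z -> `|x - z| <= `|x| + 1.
  by move=> Fz; rewrite (le_trans (ler_normB _ _)) // lerD2l; apply: FB.
apply/eqP; rewrite eq_le; apply/andP; split.
  apply: ge_sup; first by exists `|x - e|, e => //; apply: SF.
  by move=> _ [z Fz <-]; apply: dist_le.
rewrite -far_e; apply: ub_le_sup.
  by exists (`|x| + 1) => _ [z Fz <-]; apply: dist_le.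
by exists (- e) => //; apply: SF; rewrite /unit_sphere /= normrN.
Qed.

Lemma inf_dist_le (F : set X) (x : X) :
  unit_sphere `<=` F -> inf [set `|x - z| | z in F] <= `| `|x| - 1 |.
Proof.
move=> SF; have [e e1 xe] := exists_unit_dist x.
rewrite -(xe 1) scale1r; apply: ge_inf; last by exists e => //; apply: SF.
by exists 0 => _ [z _ <-].
Qed.

Lemma Pnear_sub_Qfar_opp (F : set X) (x : X) (d : R) :
  unit_sphere `<=` F -> F `<=` unit_ball ->
  (forall y, F y -> 1 <= `|x| \/ `|y| = 1) ->
  Pnear F x d `<=` Qfar F (- x) d.
Proof.
move=> SF FB Fcase y [Fy near_y]; split=> //.
rewrite farradE // normrN -opprD normrN.
have dxy : `|x - y| <= `| `|x| - 1 | + d.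
  by rewrite (le_trans near_y) // lerD2r inf_dist_le.
have lb_x := ler_norm2B_normD x y.
have lb_y := ler_norm2B_normD y x.
rewrite distrC (addrC y) in lb_y.
have [x1|x1] := leP 1 `|x|.
  by rewrite ger0_norm ?subr_ge0 // in dxy; lra.
rewrite ltr0_norm ?subr_lt0 // in dxy.
by case: (Fcase y Fy) => y1; [lra | rewrite y1 in lb_y; lra].
Qed.

Lemma Qfar0_unit_sphere_ball (x : X) :
  Qfar unit_sphere x 0 = Qfar unit_ball x 0.
Proof.
rewrite /Qfar !farradE ?subr0 //; try exact: unit_sphere_sub_ball.
apply/seteqP; split=> y [Fy far_y]; split=> //; first exact: unit_sphere_sub_ball.
apply/eqP; rewrite eq_le Fy /=.
by rewrite -(lerD2l `|x|) (le_trans far_y) // ler_normB.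
Qed.

End UnitBallDistances.

Theorem proposition2p12 (R : realType) (X : completeNormedModType R)
  (hX : exists v : X, v != 0) (x : X) (d : R) (hd : 0 <= d <= 2) :
  [/\ (1 <= `|x| -> Pnear unit_ball x d `<=` Qfar unit_ball (- x) d),
      Pnear unit_sphere x d `<=` Qfar unit_sphere (- x) d &
      Qfar unit_sphere x 0 = Qfar unit_ball x 0].
Proof.
split.
- move=> x1; apply: Pnear_sub_Qfar_opp => //; first exact: unit_sphere_sub_ball.
  by move=> y _; left.
- apply: Pnear_sub_Qfar_opp => //; first exact: unit_sphere_sub_ball.
  by move=> y y1; right.
- exact: Qfar0_unit_sphere_ball.
Qed.
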